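(* Let $(E_1,E_2)$ be a matched pair of Courant algebroids, both of split signature, with connections $\nabla^{\to}$ ($E_1$-connection on $E_2$) and $\nabla^{\leftarrow}$ ($E_2$-connection on $E_1$), and let $D_1\subset E_1$, $D_2\subset E_2$ be Dirac structures. Then $D_1\oplus D_2$ is a Dirac structure in the matched sum $E_1\oplus E_2$ if and only if $\nabla^{\leftarrow}_\alpha a\in\Gamma(D_1)$ and $\nabla^{\to}_a\alpha\in\Gamma(D_2)$ for all $\alpha\in\Gamma(D_2)$ and $a\in\Gamma(D_1)$.
   Context: A Courant algebroid $(E,\langle\cdot,\cdot\rangle,\rho,\diamond)$: real vector bundle with symmetric nondegenerate fiberwise form, bracket and anchor satisfying (J) $\phi\diamond(\phi_1\diamond\phi_2)=\phi_1\diamond(\phi\diamond\phi_2)+(\phi\diamond\phi_1)\diamond\phi_2$, (L) $\phi\diamond(f\phi')=(\rho(\phi)f)\phi'+f(\phi\diamond\phi')$, (S) $\phi\diamond\phi=\tfrac12 D\langle\phi,\phi\rangle$, (I) $\rho(\phi)\langle\phi',\phi'\rangle=2\langle\phi\diamond\phi',\phi'\rangle$, with $\langle Df,\phi\rangle=\rho(\phi)f$. A Dirac structure in a Courant algebroid of split signature is a maximal isotropic subbundle $D$ with $\Gamma(D)\diamond\Gamma(D)\subset\Gamma(D)$. A matched pair $(E_1,E_2)$: metric-preserving connections $\nabla^{\to}$, $\nabla^{\leftarrow}$ with $\nabla^{\to}_{D_1f}=0$, $\nabla^{\leftarrow}_{D_2f}=0$ such that $E_1\oplus E_2$ with pairing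 $\langle a,b\rangle_1+\langle\alpha,\beta\rangle_2$, anchor $\rho_1(a)+\rho_2(\alpha)$ and bracket $(a\oplus\alpha)\diamond(b\oplus\beta)=(a\diamond_1b+\nabla^{\leftarrow}_\alpha b-\nabla^{\leftarrow}_\beta a+\mho(\alpha,\beta)+\tfrac12D_1\langle\alpha,\beta\rangle_2)\oplus(\alpha\diamond_2\beta+\nabla^{\to}_a\beta-\nabla^{\to}_b\alpha+\Omega(a,b)+\tfrac12D_2\langle a,b\rangle_1)$ is a Courant algebroid (the matched sum), where $\langle\gamma,\Omega(a,b)\rangle_2=\tfrac12(\langle\nabla^{\leftarrow}_\gamma a,b\rangle_1-\langle a,\nabla^{\leftarrow}_\gamma b\rangle_1)$ and $\langle c,\mho(\alpha,\beta)\rangle_1=\tfrac12(\langle\nabla^{\to}_c\alpha,\beta\rangle_2-\langle\alpha,\nabla^{\to}_c\beta\rangle_2)$. *)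

(* Section-level (algebraic) model of Courant algebroids:
   F plays the role of C^oo(M) (a commutative ring in which 2 is invertible),
   an lmodType F plays the role of the C^oo(M)-module Gamma(E) of sections. *)
From HB Require Import structures.
From mathcomp Require Import all_boot all_order all_algebra.
Set Implicit Arguments. Unset Strict Implicit. Unset Printing Implicit Defensive.
Import Order.TTheory GRing.Theory Num.Theory.
Local Open Scope ring_scope.

Section CourantDefs.
Variable F : comUnitRingType.

Definition is_courant (E : lmodType F) (pair : E -> E -> F) (anchor : E -> F -> F)
    (Dop : F -> E) (br : E -> E -> E) : Prop :=
  (forall x y, pair x y = pair y x) /\
      (forall (f : F) x y z, pair (f *: x + y) z = f * pair x z + pair y z) /\
      (forall x, (forall y, pair x y = 0) -> x = 0) /\
      (forall (f g : F) x y, anchor (f *: x + y) g = f * anchor x g + anchor y g) /\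
      (forall x (f g : F), anchor x (f + g) = anchor x f + anchor x g
                        /\ anchor x (f * g) = anchor x f * g + f * anchor x g) /\
      (forall (f : F) x, pair (Dop f) x = anchor x f) /\
      (forall x y z, br (x + y) z = br x z + br y z /\ br z (x + y) = br z x + br z y) /\
      (forall x y z, br x (br y z) = br y (br x z) + br (br x y) z) /\
      (forall x (f : F) y, br x (f *: y) = anchor x f *: y + f *: br x y) /\
      (forall x, br x x = (2%:R)^-1 *: Dop (pair x x)) /\
      (forall x y, anchor x (pair y y) = 2%:R * pair (br x y) y).

(* Gamma(S) for a subbundle S: a C^oo-submodule of sections. *)
Definition is_submodule (E : lmodType F) (S : E -> Prop) : Prop :=
  [/\ S 0, (forall x y, S x -> S y -> S (x + y)) & (forall (f : F) x, S x -> S (f *: x))].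

Definition is_lagrangian (E : lmodType F) (pair : E -> E -> F) (S : E -> Prop) : Prop :=
  [/\ is_submodule S,
      (forall x y, S x -> S y -> pair x y = 0) &
      (forall x, (forall y, S y -> pair x y = 0) -> S x)].

(* Split signature: section-level proxy (existence of a Lagrangian). *)
Definition split_signature (E : lmodType F) (pair : E -> E -> F) : Prop :=
  exists S : E -> Prop, is_lagrangian pair S.

Definition is_dirac (E : lmodType F) (pair : E -> E -> F) (br : E -> E -> E)
    (S : E -> Prop) : Prop :=
  is_lagrangian pair S /\ (forall x y, S x -> S y -> S (br x y)).

Definition is_metric_connection (E1 E2 : lmodType F) (anchor1 : E1 -> F -> F)
    (pair2 : E2 -> E2 -> F) (nabla : E1 -> E2 -> E2) : Prop :=
  [/\ (forall (f : F) a b al, nabla (f *: a + b) al = f *: nabla a al + nabla b al),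
      (forall a al be, nabla a (al + be) = nabla a al + nabla a be),
      (forall a (f : F) al, nabla a (f *: al) = anchor1 a f *: al + f *: nabla a al) &
      (forall a al be, anchor1 a (pair2 al be) = pair2 (nabla a al) be + pair2 al (nabla a be))].

Definition msum_pair (E1 E2 : lmodType F) (p1 : E1 -> E1 -> F) (p2 : E2 -> E2 -> F)
    (x y : E1 * E2) : F := p1 x.1 y.1 + p2 x.2 y.2.

Definition msum_anchor (E1 E2 : lmodType F) (r1 : E1 -> F -> F) (r2 : E2 -> F -> F)
    (x : E1 * E2) (f : F) : F := r1 x.1 f + r2 x.2 f.

Definition msum_D (E1 E2 : lmodType F) (D1 : F -> E1) (D2 : F -> E2) (f : F) : E1 * E2 :=
  (D1 f, D2 f).

Definition msum_bracket (E1 E2 : lmodType F)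
    (p1 : E1 -> E1 -> F) (p2 : E2 -> E2 -> F) (D1 : F -> E1) (D2 : F -> E2)
    (br1 : E1 -> E1 -> E1) (br2 : E2 -> E2 -> E2)
    (nto : E1 -> E2 -> E2) (nfrom : E2 -> E1 -> E1)
    (Omega : E1 -> E1 -> E2) (Mho : E2 -> E2 -> E1)
    (x y : E1 * E2) : E1 * E2 :=
  let: (a, al) := x in let: (b, be) := y in
  (br1 a b + nfrom al b - nfrom be a + Mho al be + (2%:R)^-1 *: D1 (p2 al be),
   br2 al be + nto a be - nto b al + Omega a b + (2%:R)^-1 *: D2 (p1 a b)).

Definition is_matched_pair (E1 E2 : lmodType F)
    (p1 : E1 -> E1 -> F) (r1 : E1 -> F -> F) (D1 : F -> E1) (br1 : E1 -> E1 -> E1)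
    (p2 : E2 -> E2 -> F) (r2 : E2 -> F -> F) (D2 : F -> E2) (br2 : E2 -> E2 -> E2)
    (nto : E1 -> E2 -> E2) (nfrom : E2 -> E1 -> E1)
    (Omega : E1 -> E1 -> E2) (Mho : E2 -> E2 -> E1) : Prop :=
  is_metric_connection r1 p2 nto /\
      is_metric_connection r2 p1 nfrom /\
      (forall (f : F) al, nto (D1 f) al = 0) /\
      (forall (f : F) a, nfrom (D2 f) a = 0) /\
      (forall a b ga, p2 ga (Omega a b) = (2%:R)^-1 * (p1 (nfrom ga a) b - p1 a (nfrom ga b))) /\
      (forall al be c, p1 c (Mho al be) = (2%:R)^-1 * (p2 (nto c al) be - p2 al (nto c be))) /\
      is_courant (msum_pair p1 p2) (msum_anchor r1 r2) (msum_D D1 D2)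
        (msum_bracket p1 p2 D1 D2 br1 br2 nto nfrom Omega Mho).

End CourantDefs.

(* The argument has two halves.
   - D1 (+) D2 is always Lagrangian for the orthogonal sum pairing
     <a+al, b+be> = <a,b>_1 + <al,be>_2, since D1 and D2 are
     (lemma [lagrangian_prod]).  So only closure under the bracket matters.
   - For a in D1, al in D2 the matched-sum bracket of the "mixed" sections
     0+al and a+0 is (nabla<-_al a) + (- nabla->_a al)
     (lemma [msum_bracket_mixed]); hence bracket closure forces the two
     connections to preserve D1 and D2.
   - Conversely, if the connections preserve D1, D2, then Omega(a,b) and
     Mho(al,be) lie in D2, D1 for a, b in D1 and al, be in D2, because their
     pairings with D2 (resp. D1) vanish by isotropy and D2, D1 are maximal
     isotropic (lemmas [Omega_in_dirac], [Mho_in_dirac]); on D1 (+) D2 the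
     D-terms of the bracket vanish ([msum_bracket_isotropic]), so every
     component of the bracket of two sections of D1 (+) D2 lies in D1, D2. *)
From HB Require Import structures.
From mathcomp Require Import all_boot all_order all_algebra.
Import GRing.Theory.
Local Open Scope ring_scope.
Set Implicit Arguments. Unset Strict Implicit.

Lemma additive_map0 (M N : zmodType) (g : M -> N) :
  (forall x y, g (x + y) = g x + g y) -> g 0 = 0.
Proof. by move=> gD; apply/eqP; rewrite -(subrr (g 0)) -{2}(addr0 0) gD addrK. Qed.

Section CourantFacts.
Variable F : comUnitRingType.
Variables (E : lmodType F) (p : E -> E -> F) (r : E -> F -> F).
Variables (Dop : F -> E) (br : E -> E -> E).
Hypothesis HC : is_courant p r Dop br.

Lemma courant_pair0l z : p 0 z = 0.
Proof.
case: HC => _ [pD _]; apply: (@additive_map0 _ _ (p^~ z)) => x y.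
by rewrite -{1}(scale1r x) pD mul1r.
Qed.

Lemma courant_pair0r z : p z 0 = 0.
Proof. by case: HC => ps _; rewrite ps courant_pair0l. Qed.

Lemma courant_nondeg_l x : (forall y, p y x = 0) -> x = 0.
Proof. by case: HC => ps [_ [pN _]] Hx; apply: pN => y; rewrite ps. Qed.

(* D 0 = 0, since <D0, y> = rho(y) 0 = 0 (rho(y) is a derivation). *)
Lemma courant_D0 : Dop 0 = 0.
Proof.
case: HC => _ [_ [pN [_ [rDer [pDop _]]]]]; apply: pN => y; rewrite pDop.
by apply: (@additive_map0 _ _ (r y)) => f g; case: (rDer y f g).
Qed.

Lemma courant_br0l x : br 0 x = 0.
Proof.
case: HC => _ [_ [_ [_ [_ [_ [brD _]]]]]].
by apply: (@additive_map0 _ _ (br^~ x)) => y z; case: (brD y z x).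
Qed.

Lemma courant_br0r x : br x 0 = 0.
Proof.
case: HC => _ [_ [_ [_ [_ [_ [brD _]]]]]].
by apply: additive_map0 => y z; case: (brD y z x).
Qed.

End CourantFacts.

Lemma submodule_opp (F : comUnitRingType) (E : lmodType F) (S : E -> Prop) x :
  is_submodule S -> S x -> S (- x).
Proof. by case=> _ _ SZ Sx; rewrite -scaleN1r; apply: SZ. Qed.

Lemma submodule_sub (F : comUnitRingType) (E : lmodType F) (S : E -> Prop) x y :
  is_submodule S -> S x -> S y -> S (x - y).
Proof. by move=> Sub Sx Sy; case: (Sub) => _ SD _; apply: SD (submodule_opp Sub Sy). Qed.

Lemma metric_connection0 (F : comUnitRingType) (E1 E2 : lmodType F)
    (r1 : E1 -> F -> F) (p2 : E2 -> E2 -> F) (nabla : E1 -> E2 -> E2) a :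
  is_metric_connection r1 p2 nabla -> nabla a 0 = 0.
Proof. by case=> _ nD _ _; apply: additive_map0 => x y; apply: nD. Qed.

Lemma lagrangian_prod (F : comUnitRingType) (E1 E2 : lmodType F)
    (p1 : E1 -> E1 -> F) (p2 : E2 -> E2 -> F) (S1 : E1 -> Prop) (S2 : E2 -> Prop) :
  (forall z, p1 z 0 = 0) -> (forall z, p2 z 0 = 0) ->
  is_lagrangian p1 S1 -> is_lagrangian p2 S2 ->
  is_lagrangian (msum_pair p1 p2) (fun x : E1 * E2 => S1 x.1 /\ S2 x.2).
Proof.
move=> p10 p20 [[S10 S1D S1Z] Iso1 Max1] [[S20 S2D S2Z] Iso2 Max2]; split.
- split=> // [x y [Sx1 Sx2] [Sy1 Sy2] | f x [Sx1 Sx2]].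
  + by split; [apply: S1D | apply: S2D].
  + by split; [apply: S1Z | apply: S2Z].
- by move=> x y [? ?] [? ?]; rewrite /msum_pair Iso1 // Iso2 // addr0.
- move=> [x1 x2] Hx; split => /=.
  + apply: Max1 => y Sy; have := Hx (y, 0) (conj Sy S20).
    by rewrite /msum_pair /= p20 addr0.
  + apply: Max2 => y Sy; have := Hx (0, y) (conj S10 Sy).
    by rewrite /msum_pair /= p10 add0r.
Qed.

Section MatchedPair.
Variable F : comUnitRingType.
Variables (E1 E2 : lmodType F).
Variables (p1 : E1 -> E1 -> F) (r1 : E1 -> F -> F) (D1 : F -> E1) (br1 : E1 -> E1 -> E1).
Variables (p2 : E2 -> E2 -> F) (r2 : E2 -> F -> F) (D2 : F -> E2) (br2 : E2 -> E2 -> E2).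
Variables (nto : E1 -> E2 -> E2) (nfrom : E2 -> E1 -> E1).
Variables (Omega : E1 -> E1 -> E2) (Mho : E2 -> E2 -> E1).
Hypotheses (HC1 : is_courant p1 r1 D1 br1) (HC2 : is_courant p2 r2 D2 br2).
Hypothesis Hmp : is_matched_pair p1 r1 D1 br1 p2 r2 D2 br2 nto nfrom Omega Mho.

Let bracket := msum_bracket p1 p2 D1 D2 br1 br2 nto nfrom Omega Mho.

Let nto0 a : nto a 0 = 0.
Proof. by case: Hmp => Hto _; apply: metric_connection0 Hto. Qed.

Let nfrom0 al : nfrom al 0 = 0.
Proof. by case: Hmp => _ [Hfrom _]; apply: metric_connection0 Hfrom. Qed.

(* Omega(0, a) = 0: its pairing with any gamma is (<nabla_gamma 0, a> - <0, ..>)/2. *)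
Lemma Omega0l a : Omega 0 a = 0.
Proof.
case: Hmp => _ [_ [_ [_ [HOm _]]]]; apply: (courant_nondeg_l HC2) => ga.
by rewrite HOm nfrom0 !(courant_pair0l HC1) subrr mulr0.
Qed.

Lemma Mho0r al : Mho al 0 = 0.
Proof.
case: Hmp => _ [_ [_ [_ [_ [HMho _]]]]]; apply: (courant_nondeg_l HC1) => c.
by rewrite HMho nto0 !(courant_pair0r HC2) subrr mulr0.
Qed.

Lemma msum_bracket_mixed a al : bracket (0, al) (a, 0) = (nfrom al a, - nto a al).
Proof.
rewrite /bracket /msum_bracket (courant_br0l HC1) (courant_br0r HC2) nfrom0 nto0.
rewrite Mho0r Omega0l (courant_pair0r HC2) (courant_pair0l HC1).
by rewrite (courant_D0 HC1) (courant_D0 HC2) !scaler0 !addr0 !subr0 !add0r.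
Qed.

Lemma msum_bracket_isotropic a al b be :
  p1 a b = 0 -> p2 al be = 0 ->
  bracket (a, al) (b, be) =
    (br1 a b + nfrom al b - nfrom be a + Mho al be,
     br2 al be + nto a be - nto b al + Omega a b).
Proof.
move=> pab palbe; rewrite /bracket /msum_bracket pab palbe.
by rewrite (courant_D0 HC1) (courant_D0 HC2) !scaler0 !addr0.
Qed.

Variables (Dir1 : E1 -> Prop) (Dir2 : E2 -> Prop).
Hypotheses (L1 : is_lagrangian p1 Dir1) (L2 : is_lagrangian p2 Dir2).
Hypothesis Hpres :
  forall al a, Dir2 al -> Dir1 a -> Dir1 (nfrom al a) /\ Dir2 (nto a al).

(* Omega(a, b) is orthogonal to Dir2 by isotropy of Dir1, hence lies in Dir2. *)
Lemma Omega_in_dirac a b : Dir1 a -> Dir1 b -> Dir2 (Omega a b).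
Proof.
case: Hmp => _ [_ [_ [_ [HOm _]]]]; case: HC2 => ps2 _.
case: L1 => _ Iso1 _; case: L2 => _ _ Max2 Da Db.
apply: Max2 => ga Dga; rewrite ps2 HOm.
case: (Hpres Dga Da) => Da' _; case: (Hpres Dga Db) => Db' _.
by rewrite Iso1 // Iso1 // subrr mulr0.
Qed.

(* Mho(al, be) is orthogonal to Dir1 by isotropy of Dir2, hence lies in Dir1. *)
Lemma Mho_in_dirac al be : Dir2 al -> Dir2 be -> Dir1 (Mho al be).
Proof.
case: Hmp => _ [_ [_ [_ [_ [HMho _]]]]]; case: HC1 => ps1 _.
case: L1 => _ _ Max1; case: L2 => _ Iso2 _ Dal Dbe.
apply: Max1 => c Dc; rewrite ps1 HMho.
case: (Hpres Dal Dc) => _ Dal'; case: (Hpres Dbe Dc) => _ Dbe'.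
by rewrite Iso2 // Iso2 // subrr mulr0.
Qed.

End MatchedPair.

Theorem mainTheorem13 (F : comUnitRingType) (two_unit : (2%:R : F) \is a GRing.unit)
    (E1 E2 : lmodType F)
    (p1 : E1 -> E1 -> F) (r1 : E1 -> F -> F) (D1 : F -> E1) (br1 : E1 -> E1 -> E1)
    (p2 : E2 -> E2 -> F) (r2 : E2 -> F -> F) (D2 : F -> E2) (br2 : E2 -> E2 -> E2)
    (nto : E1 -> E2 -> E2) (nfrom : E2 -> E1 -> E1)
    (Omega : E1 -> E1 -> E2) (Mho : E2 -> E2 -> E1)
    (HC1 : is_courant p1 r1 D1 br1) (HC2 : is_courant p2 r2 D2 br2)
    (Hsplit1 : split_signature p1) (Hsplit2 : split_signature p2)
    (Hmp : is_matched_pair p1 r1 D1 br1 p2 r2 D2 br2 nto nfrom Omega Mho)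
    (Dir1 : E1 -> Prop) (Dir2 : E2 -> Prop)
    (HD1 : is_dirac p1 br1 Dir1) (HD2 : is_dirac p2 br2 Dir2) :
  is_dirac (msum_pair p1 p2) (msum_bracket p1 p2 D1 D2 br1 br2 nto nfrom Omega Mho)
           (fun x : E1 * E2 => Dir1 x.1 /\ Dir2 x.2)
  <-> (forall (al : E2) (a : E1), Dir2 al -> Dir1 a -> Dir1 (nfrom al a) /\ Dir2 (nto a al)).
Proof.
case: HD1 HD2 => [L1 Br1] [L2 Br2].
have Sub1 : is_submodule Dir1 by case: L1.
have Sub2 : is_submodule Dir2 by case: L2.
have [[Dir10 S1D _] [Dir20 S2D _]] := (Sub1, Sub2).
split=> [[_ BrSum] al a Dal Da | Hpres].
- have := BrSum (0, al) (a, 0) (conj Dir10 Dal) (conj Da Dir20).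
  rewrite (msum_bracket_mixed HC1 HC2 Hmp) /= => -[Dfrom Dto].
  by split=> //; rewrite -(opprK (nto a al)); apply: submodule_opp.
- split; first exact: lagrangian_prod (courant_pair0r HC1) (courant_pair0r HC2) L1 L2.
  move=> [a al] [b be] [Da Dal] [Db Dbe].
  case: (L1) (L2) => _ Iso1 _ [_ Iso2 _].
  rewrite (msum_bracket_isotropic _ _ _ _ HC1 HC2 (Iso1 _ _ Da Db) (Iso2 _ _ Dal Dbe)) /=.
  have [Dalb Dbal] := Hpres al b Dal Db; have [Dbea Dabe] := Hpres be a Dbe Da.
  have DMho := Mho_in_dirac HC1 Hmp L1 L2 Hpres Dal Dbe.
  have DOmega := Omega_in_dirac HC2 Hmp L1 L2 Hpres Da Db.
  split; [apply: (S1D _ _ _ DMho) | apply: (S2D _ _ _ DOmega)]; apply: submodule_sub => //.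
  + exact: (S1D _ _ (Br1 _ _ Da Db) Dalb).
  + exact: (S2D _ _ (Br2 _ _ Dal Dbe) Dabe).
Qed.
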